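(* For all $a, b \in \mathbb{N}$, $R_\mathrm{cyc}(K_a, P_b^\mathrm{mon}) = 1 + (a-1)(b-1)$.
   Context: All graphs are finite, simple and undirected, and a graph of order $n$ has vertex set $\{0,1,\ldots,n-1\}$; $K_n$ is the complete graph on $\{0,\ldots,n-1\}$. A $2$-edge-coloring of $K_n$ assigns each edge a color in $\{1,2\}$. An embedding of $H$ in color $j$ is an injective map $\varphi\colon V(H)\to V(K_n)$ such that every edge $uv$ of $H$ goes to an edge $\{\varphi(u),\varphi(v)\}$ of color $j$; it is increasing up to a cyclic permutation if there exists $t\in V(H)$ such that $(\varphi(t),\ldots,\varphi(|H|-1),\varphi(0),\ldots,\varphi(t-1))$ is increasing. $R_\mathrm{cyc}(H_1,H_2)$ is the smallest $n$ such that every $2$-edge-coloring of $K_n$ admits an embedding of $H_1$ in color $1$ or of $H_2$ in color $2$ that is increasing up to a cyclic permutation. The monotone path $P_n^\mathrm{mon}$ has edges $\{i,i+1\}$, $0\le i\le n-2$. *)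

From mathcomp Require Import all_boot.
Set Implicit Arguments. Unset Strict Implicit. Unset Printing Implicit Defensive.

Record sgraph := SGraph {
  order : nat;
  adj : rel 'I_order;
  adj_sym : symmetric adj;
  adj_irr : irreflexive adj }.

Definition K_adj (n : nat) : rel 'I_n := fun i j => i != j.
Lemma K_sym n : symmetric (@K_adj n).
Proof. by move=> i j; rewrite /K_adj eq_sym. Qed.
Lemma K_irr n : irreflexive (@K_adj n).
Proof. by move=> i; rewrite /K_adj eqxx. Qed.
Definition K (n : nat) : sgraph := SGraph (@K_sym n) (@K_irr n).

Definition P_adj (n : nat) : rel 'I_n :=
  fun i j => ((val i).+1 == val j) || ((val j).+1 == val i).
Lemma P_sym n : symmetric (@P_adj n).
Proof. by move=> i j; rewrite /P_adj orbC. Qed.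
Lemma P_irr n : irreflexive (@P_adj n).
Proof. by move=> i; rewrite /P_adj !(gtn_eqF (ltnSn _)). Qed.
Definition Pmon (n : nat) : sgraph := SGraph (@P_sym n) (@P_irr n).

(* A 2-edge-coloring of K_n: each edge {x,y} (a 2-element subset of 'I_n)
   gets a color in {1,2}; values on non-edges are irrelevant. *)
Definition two_coloring (n : nat) (col : {set 'I_n} -> nat) : Prop :=
  forall e : {set 'I_n}, #|e| = 2 -> col e = 1 \/ col e = 2.

Definition embedding_in_color (H : sgraph) (n : nat) (col : {set 'I_n} -> nat)
  (j : nat) (phi : 'I_(order H) -> 'I_n) : Prop :=
  injective phi /\
  forall u v : 'I_(order H), adj u v -> col [set phi u; phi v] = j.

Definition cyc_increasing (H : sgraph) (n : nat) (phi : 'I_(order H) -> 'I_n)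
  : Prop :=
  exists t : 'I_(order H),
    sorted ltn [seq val (phi i) | i <- rot t (enum 'I_(order H))].

Definition cyc_arrows (H1 H2 : sgraph) (n : nat) : Prop :=
  forall col : {set 'I_n} -> nat, two_coloring col ->
    (exists phi, embedding_in_color col 1 phi /\ cyc_increasing (H:=H1) phi) \/
    (exists phi, embedding_in_color col 2 phi /\ cyc_increasing (H:=H2) phi).

Definition Rcyc_eq (H1 H2 : sgraph) (N : nat) : Prop :=
  cyc_arrows H1 H2 N /\ forall m, m < N -> ~ cyc_arrows H1 H2 m.

(* Erdos-Szekeres type argument.  Upper bound: in a set S of vertices, the
   "sources" (vertices with no color-2 edge coming from a smaller vertex of S)
   form a color-1 clique.  If there are fewer than a of them, every other
   vertex has a color-2 predecessor in S, so we may discard the sources and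
   recurse; starting from 1 + (a-1)(b-1) vertices, b-1 rounds leave a vertex at
   the end of an increasing color-2 path with b vertices.  Lower bound: cut
   {0,...,m-1} into a-1 intervals of length b-1, color edges inside an interval
   with 2 and all others with 1; a color-1 clique meets each interval at most
   once and a color-2 path stays inside one interval. *)

From mathcomp Require Import all_boot zify.
(* Imported last so that [Defs.order] shadows [fingraph.order]. *)
From Pilot Require Import Defs.
Set Implicit Arguments. Unset Strict Implicit. Unset Printing Implicit Defensive.

Lemma antichain_or_walk (T : eqType) (E : rel T) (a b : nat) (S : seq T) :
  0 < a -> 1 + (a - 1) * b <= size S ->
  (exists s, [/\ size s = a, subseq s S & {in s &, forall u v, ~~ E u v}]) \/
  (exists x p, [/\ x \in S, size p = b & path E x p]).
Proof.
move=> a_gt0; elim: b S => [|b IH] S size_S.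
  by right; case: S size_S => [|x S] // _; exists x, [::]; rewrite inE eqxx.
pose source v := ~~ has (E^~ v) S.
have [many | few] := leqP a (count source S).
  left; exists (take a (filter source S)); split.
  - by rewrite size_takel // size_filter.
  - exact: subseq_trans (take_subseq _ _) (filter_subseq _ _).
  - move=> u v /mem_take; rewrite mem_filter => /andP[_ uS].
    by move=> /mem_take; rewrite mem_filter => /andP[/hasPn/(_ u uS) ? _].
have size_rest : 1 + (a - 1) * b <= size (filter (predC source) S).
  by move: size_S; rewrite size_filter -(count_predC source) mulnS; lia.
have [[s [size_s sub_s anti]] | [x [p [xS size_p walk]]]] := IH _ size_rest.
  by left; exists s; split=> //; apply: subseq_trans sub_s (filter_subseq _ _).
move: xS; rewrite mem_filter => /andP[/negPn/hasP[u uS Eux] _].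
by right; exists u, (x :: p); rewrite /= size_p Eux.
Qed.

Lemma nth_cyc_embedding (H : sgraph) n (col : {set 'I_n} -> nat) (j : nat)
    (x0 : 'I_n) (s : seq 'I_n) :
  0 < order H -> size s = order H -> sorted ltn (map val s) ->
  (forall u v : 'I_(order H), adj u v -> col [set nth x0 s u; nth x0 s v] = j) ->
  embedding_in_color col j (fun i : 'I_(order H) => nth x0 s i) /\
  cyc_increasing (fun i : 'I_(order H) => nth x0 s i).
Proof.
move=> H_gt0 size_s incr colored.
have uniq_s : uniq s.
  by rewrite -(map_inj_uniq val_inj) (sorted_uniq ltn_trans ltnn).
split.
  by split=> // u v /eqP; rewrite nth_uniq ?size_s // => /eqP/val_inj.
exists (Ordinal H_gt0); rewrite rot0.
rewrite (map_comp (fun k => val (nth x0 s k)) val) val_enum_ord map_comp.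
by rewrite map_nth_iota0 -size_s ?take_size.
Qed.

Definition up_edge n (col : {set 'I_n} -> nat) (j : nat) : rel 'I_n :=
  fun u v => (u < v) && (col [set u; v] == j).

Lemma up_edge_ltn n (col : {set 'I_n} -> nat) j :
  subrel (up_edge col j) (relpre val ltn).
Proof. by move=> u v /andP[]. Qed.

Lemma two_coloring_pair_1 n (col : {set 'I_n} -> nat) (u v : 'I_n) :
  two_coloring col -> u != v ->
  ~~ up_edge col 2 u v -> ~~ up_edge col 2 v u -> col [set u; v] = 1.
Proof.
move=> col2 uv not_uv not_vu.
case: (col2 [set u; v]) => [|//|col_uv]; first by rewrite cards2 uv.
move: not_uv not_vu; rewrite /up_edge (setUC [set v]) col_uv eqxx !andbT.
by case: ltngtP => // /val_inj/eqP; rewrite (negPf uv).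
Qed.

Lemma cyc_arrows_K_Pmon (a b : nat) : 0 < a -> 0 < b ->
  cyc_arrows (K a) (Pmon b) (1 + (a - 1) * (b - 1)).
Proof.
move=> a_gt0 b_gt0 col col2.
set N := 1 + _; have x0 : 'I_N := ord0.
have size_enum : N <= size (enum 'I_N) by rewrite size_enum_ord.
have [[s [size_s sub_s anti]] | [x [p [_ size_p walk]]]] :=
  antichain_or_walk (up_edge col 2) a_gt0 size_enum.
- left; exists (fun i : 'I_a => nth x0 s i); apply: nth_cyc_embedding => //.
    have := map_subseq val sub_s; rewrite val_enum_ord => /subseq_sorted.
    by apply; [exact: ltn_trans | exact: iota_ltn_sorted].
  move=> u v /= uv.
  have in_s (w : 'I_a) : nth x0 s w \in s by rewrite mem_nth // size_s.
  apply: two_coloring_pair_1 => //; [|exact: anti..].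
  by rewrite nth_uniq ?size_s // (subseq_uniq sub_s (enum_uniq _)).
- right; exists (fun i : 'I_b => nth x0 (x :: p) i).
  apply: nth_cyc_embedding; rewrite /= ?size_p ?subn1 ?prednK //.
    by rewrite path_map; apply: sub_path walk; apply: up_edge_ltn.
  have step (u v : 'I_b) : u.+1 = v ->
      col [set nth x0 (x :: p) u; nth x0 (x :: p) v] = 2.
    move=> uv; have u_lt : u < size p by rewrite size_p; move: (ltn_ord v); lia.
    by have /andP[_ /eqP] := pathP x0 walk _ u_lt; rewrite -uv.
  by move=> u v /orP[/eqP/step | /eqP/step]; rewrite // setUC.
Qed.

Lemma cyc_arrows_min_order_le (H1 H2 : sgraph) (m : nat) :
  cyc_arrows H1 H2 m -> minn (order H1) (order H2) <= m.
Proof.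
case/(_ (fun _ => 1)) => [e _ | [phi [[inj _] _]] | [phi [[inj _] _]]]; first by left.
all: by have := leq_card phi inj; rewrite !card_ord; lia.
Qed.

Lemma ord_consecutive_const (T : Type) (k : nat) (f : 'I_k -> T) :
  (forall i j : 'I_k, i.+1 = j -> f i = f j) -> forall i j, f i = f j.
Proof.
move=> step; suff to_larger (i j : 'I_k) : i <= j -> f i = f j.
  by move=> i j; case: (leqP i j) => [/to_larger // | /ltnW/to_larger ->].
move/subnK; move: (j - i) => n; elim: n j => [|n IH] j ji.
  by congr f; apply: val_inj.
have lt_k : n + i < k by have := ltn_ord j; lia.
by rewrite (IH (Ordinal lt_k)) //; apply: step; rewrite /= -ji.
Qed.

Definition block_coloring (m d : nat) (e : {set 'I_m}) : nat :=
  if [exists u in e, exists v in e, u %/ d != v %/ d] then 1 else 2.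

Lemma block_two_coloring (m d : nat) : two_coloring (@block_coloring m d).
Proof. by move=> e _; rewrite /block_coloring; case: ifP; auto. Qed.

Lemma block_coloring_pair (m d : nat) (u v : 'I_m) :
  block_coloring d [set u; v] = if u %/ d == v %/ d then 2 else 1.
Proof.
rewrite /block_coloring; case: existsP => [[w] | none].
  case/andP=> + /existsP[w' /andP[+ +]]; rewrite !inE.
  by move=> /orP[]/eqP-> /orP[]/eqP->; rewrite ?eqxx // eq_sym => /negPf->.
suff -> : u %/ d == v %/ d by [].
apply/negPn/negP => uv; apply: none; exists u; rewrite set21 /=.
by apply/existsP; exists v; rewrite set22 uv.
Qed.

Lemma block_coloring_no_K (a d m : nat) (phi : 'I_a -> 'I_m) :
  0 < a -> 0 < d -> m <= (a - 1) * d ->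
  ~ embedding_in_color (H := K a) (block_coloring d) 1 phi.
Proof.
move=> a_gt0 d_gt0 m_le [_ colored].
have block_lt i : phi i %/ d < a - 1.
  by rewrite ltn_divLR //; have := ltn_ord (phi i); lia.
have block_inj : injective (fun i => Ordinal (block_lt i)).
  move=> i j /(congr1 val) /= same; apply/eqP/negPn/negP => /(colored i j).
  by rewrite block_coloring_pair same eqxx.
by have := leq_card _ block_inj; rewrite !card_ord; lia.
Qed.

Lemma block_coloring_no_Pmon (b d m : nat) (phi : 'I_b -> 'I_m) :
  0 < d -> d < b ->
  ~ embedding_in_color (H := Pmon b) (block_coloring d) 2 phi.
Proof.
move=> d_gt0 d_lt [inj colored].
have same_block : forall i j, phi i %/ d = phi j %/ d.
  apply: ord_consecutive_const => i j ij; apply/eqP.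
  have := colored i j; rewrite /= /P_adj ij eqxx block_coloring_pair.
  by move=> /(_ isT); case: eqP.
have offset_inj : injective (fun i => Ordinal (ltn_pmod (phi i) d_gt0)).
  move=> i j /(congr1 val) /= same_mod; apply/inj/ord_inj.
  by rewrite (divn_eq (phi i) d) (divn_eq (phi j) d) same_mod (same_block i j).
by have := leq_card _ offset_inj; rewrite !card_ord; lia.
Qed.

Theorem corollary4p21 (a b : nat) (ha : 1 <= a) (hb : 1 <= b) :
  Rcyc_eq (K a) (Pmon b) (1 + (a - 1) * (b - 1)).
Proof.
split; first exact: cyc_arrows_K_Pmon.
move=> m m_lt arrows.
have m_gt0 : 0 < m by have := cyc_arrows_min_order_le arrows; rewrite /=; lia.
have : 0 < (a - 1) * (b - 1) by lia.
rewrite muln_gt0 => /andP[_ d_gt0].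
case: (arrows _ (@block_two_coloring m (b - 1))) => -[phi [emb _]].
- by apply: block_coloring_no_K emb; lia.
- by apply: block_coloring_no_Pmon emb; lia.
Qed.
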